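(* Let $n\ge3$ and let $\mathcal{G}$ be the directed line graph on nodes $\{1,\dots,n\}$ with edges $(i,i+1)$ and $(i+1,i)$ for $i=1,\dots,n-1$ together with self-loops $(i,i)$ at every node, and let $\tau\in\mathbb{Z}$ with $n-1\le\tau\le 2n-3$. If $P^*$ is an optimal solution of $\max_P\min_{i,j}\mathbb{P}(T_{ij}(P)\le\tau)$ over all Markov chain strategies $P$ conforming to $\mathcal{G}$, then $\mathbb{P}(T_{1n}(P^* )\le\tau)=\mathbb{P}(T_{n1}(P^* )\le\tau)$.
   Context: A Markov chain strategy conforming to $\mathcal{G}=(V,\mathcal{E})$ is a row-stochastic nonnegative $P=(p_{ij})$ with $p_{ij}=0$ for $(i,j)\notin\mathcal{E}$. For the Markov chain $(X_k)$ with transition matrix $P$, $T_{ij}=\min\{k\ge1:X_k=j\}$ given $X_0=i$. *)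

(* R : realType, states 'I_n (node k+1 of the paper = ordinal k). *)
From mathcomp Require Import all_boot all_order all_algebra.
From mathcomp Require Import reals.
Set Implicit Arguments. Unset Strict Implicit. Unset Printing Implicit Defensive.
Import Order.TTheory GRing.Theory Num.Theory.
Local Open Scope ring_scope.

Definition line_edge (n : nat) (i j : 'I_n) : bool :=
  (i == j) || (i.+1 == j :> nat) || (j.+1 == i :> nat).

Definition line_strategy (R : realType) (n : nat) (P : 'M[R]_n) : Prop :=
  (forall i j, 0 <= P i j) /\
  (forall i, \sum_j P i j = 1) /\
  (forall i j, ~~ line_edge i j -> P i j = 0).

(* avoid P k i j = P(X_1 <> j, ..., X_k <> j | X_0 = i). *)
Fixpoint avoid (R : realType) (n : nat) (P : 'M[R]_n) (k : nat) (i j : 'I_n) : R :=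
  match k with
  | 0 => 1
  | k'.+1 => \sum_(h : 'I_n | h != j) P i h * avoid P k' h j
  end.

(* hit_le P tau i j = P(T_ij <= tau), T_ij = min{k >= 1 : X_k = j}, X_0 = i. *)
Definition hit_le (R : realType) (n : nat) (P : 'M[R]_n) (tau : nat) (i j : 'I_n) : R :=
  1 - avoid P tau i j.

(* min_{i,j} P(T_ij <= tau); the state space is nonempty and all values
   are <= 1, so the neutral element 1 does not affect the minimum. *)
Definition min_hit (R : realType) (n : nat) (P : 'M[R]_n) (tau : nat) : R :=
  \big[Num.min/1]_(i : 'I_n) \big[Num.min/1]_(j : 'I_n) hit_le P tau i j.

Definition optimal_line (R : realType) (n : nat) (tau : nat) (P : 'M[R]_n) : Prop :=
  line_strategy P /\
  forall Q : 'M[R]_n, line_strategy Q -> min_hit Q tau <= min_hit P tau.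

From mathcomp Require Import all_boot all_order all_algebra.
From mathcomp Require Import reals.
From mathcomp Require Import ring lra zify.
Set Implicit Arguments. Unset Strict Implicit. Unset Printing Implicit Defensive.
Import Order.TTheory GRing.Theory Num.Theory.
Local Open Scope ring_scope.

(* Write f = P(T_1n <= tau) and g = P(T_n1 <= tau).  On the line graph every
   P(T_ij <= tau) is at least min(f, g): for i > j a walk from n to 1 must
   pass through i and then through j, symmetrically for i < j, and a return
   to i starts with a step to a neighbour, from which coming back is at least
   as likely as an end-to-end crossing.  Hence the objective is min(f, g).
   If g < f, mix P with weight t = (f - g)/(tau + 1) with the strategy that
   always steps towards node 1.  Each step deviates from P with probability
   at most t, so f drops by at most tau t and stays above g; and the straight
   walk from n to 1, which fits in tau >= n - 1 steps, raises g by at least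
   t^(n-1) (1 - g) > 0.  The objective increases, contradicting optimality;
   the case f < g is the mirror image. *)

Section Stochastic.

Variables (R : realType) (n : nat).
Implicit Types (P X Y : 'M[R]_n) (i j y : 'I_n) (k : nat) (t : R).

Definition stochastic P : Prop :=
  (forall i j, 0 <= P i j) /\ (forall i, \sum_j P i j = 1).

Lemma line_strategy_stochastic P : line_strategy P -> stochastic P.
Proof. by case=> P0 [P1 _]. Qed.

Lemma stochastic_sum_const P y (c : R) : stochastic P -> \sum_z P y z * c = c.
Proof. by case=> _ P1; rewrite -mulr_suml P1 mul1r. Qed.

Lemma stochastic_row_le1 P y (p : pred 'I_n) :
  stochastic P -> \sum_(z | p z) P y z <= 1.
Proof.
move=> [P0 P1]; rewrite -(P1 y) [X in _ <= X](bigID p) /= lerDl.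
exact: sumr_ge0.
Qed.

Lemma stochastic_sum_le1 P y (p : pred 'I_n) (F : 'I_n -> R) :
  stochastic P -> (forall z, 0 <= F z <= 1) -> \sum_(z | p z) P y z * F z <= 1.
Proof.
move=> PS F01; apply: le_trans (stochastic_row_le1 y p PS).
apply: ler_sum => z _; rewrite -[X in _ <= X]mulr1.
by apply: ler_wpM2l; [case: PS | case/andP: (F01 z)].
Qed.

Lemma avoid_bounds P k i j : stochastic P -> 0 <= avoid P k i j <= 1.
Proof.
move=> PS; elim: k i => [|k IH] i /=; first by rewrite ler01 lexx.
rewrite stochastic_sum_le1 // andbT.
by apply: sumr_ge0 => h _; apply: mulr_ge0; [case: PS | case/andP: (IH h)].
Qed.

Lemma hit_le_ge0 P k i j : stochastic P -> 0 <= hit_le P k i j.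
Proof. by move/(avoid_bounds k i j); rewrite /hit_le subr_ge0 => /andP[]. Qed.

Lemma hit_le_le1 P k i j : stochastic P -> hit_le P k i j <= 1.
Proof. by move/(avoid_bounds k i j); rewrite /hit_le gerBl => /andP[]. Qed.

(* P(X_m = j for some 0 <= m <= k | X_0 = y): unlike [hit_le], time 0 counts. *)
Definition reach P k y j : R := if y == j then 1 else hit_le P k y j.

Lemma reach_id P k j : reach P k j j = 1.
Proof. by rewrite /reach eqxx. Qed.

Lemma reach0 P y j : y != j -> reach P 0 y j = 0.
Proof. by rewrite /reach /hit_le => /negbTE -> /=; rewrite subrr. Qed.

Lemma hit_le_reach P k y j : y != j -> hit_le P k y j = reach P k y j.
Proof. by rewrite /reach => /negbTE ->. Qed.

Lemma reach_ge0 P k y j : stochastic P -> 0 <= reach P k y j.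
Proof. by move=> PS; rewrite /reach; case: eqP => _; [apply: ler01 | apply: hit_le_ge0]. Qed.

Lemma reach_le1 P k y j : stochastic P -> reach P k y j <= 1.
Proof. by move=> PS; rewrite /reach; case: eqP => _; [apply: lexx | apply: hit_le_le1]. Qed.

Lemma hit_leS P k y j :
  stochastic P -> hit_le P k.+1 y j = \sum_h P y h * reach P k h j.
Proof.
move=> [_ P1]; rewrite /hit_le /= [RHS](bigD1 j) //= reach_id mulr1.
rewrite -{1}(P1 y) (bigD1 j) //= -addrA -sumrB; congr (_ + _).
by apply: eq_bigr => h /negbTE hj; rewrite /reach hj /hit_le mulrBr mulr1.
Qed.

Lemma reachS P k y j :
  stochastic P -> y != j -> reach P k.+1 y j = \sum_h P y h * reach P k h j.
Proof. by move=> PS yj; rewrite -hit_le_reach // hit_leS. Qed.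

Lemma reach_leS P k y j : stochastic P -> reach P k y j <= reach P k.+1 y j.
Proof.
move=> PS; elim: k y => [|k IH] y; have [->|yj] := eqVneq y j;
  rewrite ?reach_id // (reachS _ PS yj).
  by rewrite reach0 //; apply: sumr_ge0 => h _; apply: mulr_ge0;
    [case: PS | apply: reach_ge0].
rewrite (reachS _ PS yj); apply: ler_sum => h _.
by apply: ler_wpM2l; [case: PS | apply: IH].
Qed.

Definition mixmx X Y t : 'M[R]_n := (1 - t) *: X + t *: Y.

Lemma sum_mixmx X Y t y (p : pred 'I_n) (F : 'I_n -> R) :
  \sum_(z | p z) mixmx X Y t y z * F z =
  (1 - t) * \sum_(z | p z) X y z * F z + t * \sum_(z | p z) Y y z * F z.
Proof.
by rewrite !mulr_sumr -big_split; apply: eq_bigr => z _ /=; rewrite !mxE; ring.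
Qed.

Lemma mixmx_stochastic X Y t :
  0 <= t <= 1 -> stochastic X -> stochastic Y -> stochastic (mixmx X Y t).
Proof.
move=> /andP[t0 t1] [X0 X1] [Y0 Y1]; split=> [i j|i].
  by rewrite !mxE addr_ge0 // mulr_ge0 //; lra.
have := sum_mixmx X Y t i xpredT (fun=> 1).
by under eq_bigr do rewrite mulr1; rewrite -!big_distrl /= X1 Y1 !mulr1 => ->; ring.
Qed.

(* A union bound: at each step the mixture leaves the law of [X] with
   probability at most [t]. *)
Lemma avoid_mixmx X Y t k i j :
  0 <= t <= 1 -> stochastic X -> stochastic Y ->
  avoid (mixmx X Y t) k i j <= avoid X k i j + k%:R * t.
Proof.
move=> t01 XS YS; have QS := mixmx_stochastic t01 XS YS.
have /andP[t0 t1] := t01; set Q := mixmx X Y t.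
elim: k i => [|k IH] i /=; first by rewrite mul0r addr0.
have kt0 : 0 <= k%:R * t by rewrite mulr_ge0.
have IH_step : \sum_(h | h != j) Q i h * avoid Q k h j <=
               \sum_(h | h != j) Q i h * avoid X k h j + k%:R * t.
  apply: le_trans (_ : \sum_(h | h != j) Q i h * (avoid X k h j + k%:R * t) <= _).
    by apply: ler_sum => h _; apply: ler_wpM2l; [case: QS | apply: IH].
  under eq_bigr do rewrite mulrDr.
  rewrite big_split /= lerD2l -big_distrl /= -[X in _ <= X]mul1r ler_wpM2r //.
  exact: stochastic_row_le1.
have mix_step : \sum_(h | h != j) Q i h * avoid X k h j <=
                \sum_(h | h != j) X i h * avoid X k h j + t.
  rewrite sum_mixmx.
  have A0 : 0 <= \sum_(h | h != j) X i h * avoid X k h j.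
    by apply: sumr_ge0 => h _; apply: mulr_ge0; [case: XS | case/andP: (avoid_bounds k h j XS)].
  have B1 : \sum_(h | h != j) Y i h * avoid X k h j <= 1.
    by apply: stochastic_sum_le1 => // h; apply: avoid_bounds.
  have := ler_wpM2l t0 B1; rewrite mulr1; nra.
rewrite -addn1 natrD mulrDl mul1r; lra.
Qed.

End Stochastic.

Lemma nonincreasing_from (d : Order.disp_t) (T : porderType d) m (j : nat)
    (F : 'I_m -> T) :
  (forall y z : 'I_m, z = y.+1 :> nat -> (j <= y)%N -> (F z <= F y)%O) ->
  forall y w : 'I_m, (j <= y)%N -> (y <= w)%N -> (F w <= F y)%O.
Proof.
move=> Fdec y [w wm] jy /=; elim: w wm => [|w IH] wm yw.
  by have -> : Ordinal wm = y by apply: val_inj => /=; lia.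
move: yw; rewrite leq_eqVlt => /orP[/eqP yw|yw].
  by have -> : Ordinal wm = y by apply: val_inj.
apply: le_trans (IH (ltnW wm) yw); apply: Fdec => //=; lia.
Qed.

Lemma line_edgeP m (y z : 'I_m) : line_edge y z ->
  [\/ z = y :> nat, z = y.+1 :> nat | z.+1 = y :> nat].
Proof. by rewrite /line_edge => /orP[/orP[/eqP->|/eqP->]|/eqP<-]; constructor. Qed.

Lemma ler_sum_line (R : realType) m (P : 'M[R]_m) y (F G : 'I_m -> R) :
  line_strategy P -> (forall z, line_edge y z -> F z <= G z) ->
  \sum_z P y z * F z <= \sum_z P y z * G z.
Proof.
move=> [P0 [_ Pe]] FG; apply: ler_sum => z _.
have [yz|yz] := boolP (line_edge y z); first by apply: ler_wpM2l => //; apply: FG.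
by rewrite Pe // !mul0r.
Qed.

Section LineMonotone.

Variables (R : realType) (n : nat) (P : 'M[R]_n.+1).
Hypothesis P_line : line_strategy P.
Implicit Types (j y z w : 'I_n.+1) (k : nat).

Let P_st := line_strategy_stochastic P_line.

(* From [z = y + 1] the walk must visit [y] before reaching [j <= y]. *)
Lemma reach_shift_of_mono k j y z :
  (forall y z, z = y.+1 :> nat -> (j <= y)%N -> reach P k z j <= reach P k y j) ->
  z = y.+1 :> nat -> (j <= y)%N -> reach P k.+1 z j <= reach P k y j.
Proof.
move=> mono zy jy; have zj : z != j by rewrite -val_eqE /=; lia.
rewrite (reachS _ P_st zj) -[X in _ <= X](stochastic_sum_const z _ P_st).
apply: ler_sum_line => // w /line_edgeP zw.
by apply: (nonincreasing_from (F := reach P k ^~ j) mono) => //; case: zw; lia.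
Qed.

Lemma reach_mono_succ k j y z :
  z = y.+1 :> nat -> (j <= y)%N -> reach P k z j <= reach P k y j.
Proof.
elim: k y z => [|k IH] y z zy jy.
  rewrite reach0; first exact: reach_ge0.
  by rewrite -val_eqE /=; lia.
exact: le_trans (reach_shift_of_mono IH zy jy) (reach_leS _ _ _ P_st).
Qed.

Lemma reach_mono k j y w :
  (j <= y)%N -> (y <= w)%N -> reach P k w j <= reach P k y j.
Proof. exact: (nonincreasing_from (F := reach P k ^~ j) (@reach_mono_succ k j)). Qed.

Lemma reach_shift k j y z :
  z = y.+1 :> nat -> (j <= y)%N -> reach P k.+1 z j <= reach P k y j.
Proof. exact/reach_shift_of_mono/reach_mono_succ. Qed.

(* To reach node 0 the walk must first visit [j], and then take one more step. *)
Lemma reach_through k j y :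
  (0 < j <= y)%N -> reach P k.+1 y ord0 <= reach P k y j.
Proof.
move=> /andP[j_gt0]; elim: k y => [|k IH] y jy.
all: have y0 : y != ord0 by rewrite -val_eqE /= -lt0n (leq_trans j_gt0 jy).
all: have [->|yj] := eqVneq y j; rewrite ?reach_id ?reach_le1 //.
all: have nb_ge_j w : line_edge y w -> (j <= w)%N
  by move=> /line_edgeP yw; move: yj; rewrite -val_eqE /=; case: yw; lia.
all: rewrite (reachS _ P_st y0).
  rewrite reach0 // -[X in _ <= X](stochastic_sum_const y 0 P_st).
  apply: ler_sum_line => // w /nb_ge_j j_le_w; rewrite reach0 // -val_eqE /= -lt0n.
  exact: leq_trans j_gt0 j_le_w.
by rewrite (reachS _ P_st yj); apply: ler_sum_line => // w /nb_ge_j; apply: IH.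
Qed.

End LineMonotone.

Section Reversal.

Variables (R : realType) (m : nat).
Implicit Types (P : 'M[R]_m) (i j : 'I_m) (k : nat).

Definition revmx P : 'M[R]_m := \matrix_(i, j) P (rev_ord i) (rev_ord j).

Lemma avoid_revmx P k i j : avoid (revmx P) k i j = avoid P k (rev_ord i) (rev_ord j).
Proof.
elim: k i => [|k IH] i //=; rewrite (reindex_inj rev_ord_inj) /=.
apply: eq_big => [h|h _]; first by rewrite (canF_eq rev_ordK).
by rewrite mxE IH rev_ordK.
Qed.

Lemma hit_le_revmx P k i j :
  hit_le (revmx P) k i j = hit_le P k (rev_ord i) (rev_ord j).
Proof. by rewrite /hit_le avoid_revmx. Qed.

Lemma reach_revmx P k i j : reach (revmx P) k i j = reach P k (rev_ord i) (rev_ord j).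
Proof. by rewrite /reach hit_le_revmx (inj_eq rev_ord_inj). Qed.

Lemma line_edge_rev i j : line_edge (rev_ord i) (rev_ord j) = line_edge i j.
Proof.
rewrite /line_edge -!val_eqE /=; have := ltn_ord i; have := ltn_ord j.
by do ![case: eqP => ?]; lia.
Qed.

Lemma revmx_line_strategy P : line_strategy P -> line_strategy (revmx P).
Proof.
move=> [P0 [P1 Pe]]; split; [|split] => [i j|i|i j ij]; rewrite ?mxE //.
  rewrite (reindex_inj rev_ord_inj) -(P1 (rev_ord i)).
  by apply: eq_bigr => j _; rewrite mxE rev_ordK.
by rewrite Pe // line_edge_rev.
Qed.

End Reversal.

Lemma rev_ord_max n : rev_ord (@ord_max n) = ord0.
Proof. by apply: val_inj; rewrite /= subnn. Qed.

Lemma rev_ord0 n : rev_ord (@ord0 n) = ord_max.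
Proof. by apply: val_inj; rewrite /= subn1. Qed.

Section LastToFirst.

Variables (R : realType) (n : nat) (P : 'M[R]_n.+1).
Hypothesis P_line : line_strategy P.
Implicit Types (i j h : 'I_n.+1) (k : nat).

Let P_st := line_strategy_stochastic P_line.

Lemma hit_last_first_le k i j :
  (j < i)%N -> hit_le P k ord_max ord0 <= hit_le P k i j.
Proof.
move=> ji; have i_le := ltn_ord i.
rewrite !hit_le_reach; try by rewrite -val_eqE /=; lia.
apply: (@le_trans _ _ (reach P k ord_max j)); last by apply: reach_mono => //=; lia.
have [->|j0] := eqVneq j ord0; first exact: lexx.
apply: (le_trans (reach_leS _ _ _ P_st)); apply: reach_through => //=.
by move: j0; rewrite -val_eqE /=; lia.
Qed.

Lemma reach_return_right k i h : (2 <= n)%N ->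
  h = i.+1 :> nat -> hit_le P k.+1 ord_max ord0 <= reach P k h i.
Proof.
move=> n_ge2 hi; rewrite hit_le_reach; last by rewrite -val_eqE /=; lia.
have [i0|i_gt0] := posnP i.
  have -> : i = ord0 by apply: val_inj.
  have n1_lt : (n.-1 < n.+1)%N by lia.
  apply: (@le_trans _ _ (reach P k (Ordinal n1_lt) ord0)).
    by apply: reach_shift => //=; lia.
  by apply: reach_mono => //=; lia.
apply: (@le_trans _ _ (reach P k.+1 h ord0)).
  by apply: reach_mono => //=; have := ltn_ord h; lia.
by apply: reach_through => //; rewrite i_gt0 hi /=.
Qed.

End LastToFirst.

Section EndsMinimize.

Variables (R : realType) (n : nat) (P : 'M[R]_n.+1).
Hypotheses (P_line : line_strategy P) (n_ge2 : (2 <= n)%N).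
Implicit Types (i j h : 'I_n.+1) (k : nat).

Let P_st := line_strategy_stochastic P_line.
Let Prev_line := revmx_line_strategy P_line.

Lemma hit_first_last_le k i j :
  (i < j)%N -> hit_le P k ord0 ord_max <= hit_le P k i j.
Proof.
move=> ij; have := @hit_last_first_le _ _ _ Prev_line k (rev_ord i) (rev_ord j).
rewrite !hit_le_revmx !rev_ordK rev_ord_max rev_ord0; apply=> /=.
by have := ltn_ord j; lia.
Qed.

Lemma reach_return_left k i h :
  i = h.+1 :> nat -> hit_le P k.+1 ord0 ord_max <= reach P k h i.
Proof.
move=> ih; have := @reach_return_right _ _ _ Prev_line k (rev_ord i) (rev_ord h) n_ge2.
rewrite hit_le_revmx reach_revmx !rev_ordK rev_ord_max rev_ord0; apply=> /=.
by have := ltn_ord i; lia.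
Qed.

Lemma min_ends_le_hit_le k i j :
  Num.min (hit_le P k.+1 ord0 ord_max) (hit_le P k.+1 ord_max ord0) <= hit_le P k.+1 i j.
Proof.
case: (ltngtP i j) => [ij|ji|/val_inj ->].
- by rewrite ge_min hit_first_last_le.
- by rewrite ge_min hit_last_first_le ?orbT.
rewrite [hit_le P k.+1 j j]hit_leS // -[X in X <= _](stochastic_sum_const j _ P_st).
apply: ler_sum_line => // z /line_edgeP [/val_inj ->|zj|jz].
- by rewrite reach_id ge_min hit_le_le1.
- by rewrite ge_min reach_return_right ?orbT.
- by rewrite ge_min reach_return_left.
Qed.

Lemma min_hit_ends k : (0 < k)%N ->
  min_hit P k = Num.min (hit_le P k ord0 ord_max) (hit_le P k ord_max ord0).
Proof.
case: k => // k _; apply/eqP; rewrite eq_le; apply/andP; split.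
  rewrite le_min; apply/andP; split.
  - exact: le_trans (bigmin_le _ ord0 _) (bigmin_le _ ord_max _).
  - exact: le_trans (bigmin_le _ ord_max _) (bigmin_le _ ord0 _).
have min_le1 : Num.min (hit_le P k.+1 ord0 ord_max) (hit_le P k.+1 ord_max ord0) <= 1.
  by rewrite ge_min hit_le_le1.
apply: le_bigmin => // i _; apply: le_bigmin => // j _.
exact: min_ends_le_hit_le.
Qed.

End EndsMinimize.

Lemma min_hit_revmx (R : realType) n (P : 'M[R]_n.+1) k :
  line_strategy P -> (2 <= n)%N -> (0 < k)%N -> min_hit (revmx P) k = min_hit P k.
Proof.
move=> P_line n_ge2 k_gt0; rewrite (min_hit_ends P_line n_ge2 k_gt0).
rewrite (min_hit_ends (revmx_line_strategy P_line) n_ge2 k_gt0).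
by rewrite !hit_le_revmx rev_ord0 rev_ord_max minC.
Qed.

Lemma line_strategy_mixmx (R : realType) m (X Y : 'M[R]_m) t :
  0 <= t <= 1 -> line_strategy X -> line_strategy Y -> line_strategy (mixmx X Y t).
Proof.
move=> t01 XL YL.
have [Q0 Q1] := mixmx_stochastic t01 (line_strategy_stochastic XL) (line_strategy_stochastic YL).
case: XL YL => _ [_ Xe] [_ [_ Ye]]; do 2!split=> //.
by move=> i j ij; rewrite !mxE Xe ?Ye // !mulr0 addr0.
Qed.

Section DriftLeft.

Variables (R : realType) (n : nat).
Implicit Types (y z : 'I_n.+1).

Definition pred_ord y : 'I_n.+1 := Ordinal (leq_ltn_trans (leq_pred y) (ltn_ord y)).

Definition drift_left : 'M[R]_n.+1 := \matrix_(y, z) (z == pred_ord y)%:R.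

Lemma sum_drift_left y (F : 'I_n.+1 -> R) : \sum_z drift_left y z * F z = F (pred_ord y).
Proof.
rewrite (bigD1 (pred_ord y)) //= mxE eqxx mul1r big1 ?addr0 // => z /negbTE zy.
by rewrite mxE zy mul0r.
Qed.

Lemma drift_left_line : line_strategy drift_left.
Proof.
split; [|split] => [y z|y|y z]; rewrite ?mxE ?ler0n //.
  by have := sum_drift_left y (fun=> 1); under eq_bigr do rewrite mulr1.
case: eqP => // ->; rewrite /line_edge -val_eqE /=.
by case: (nat_of_ord y) => [|i]; rewrite ?eqxx ?orbT.
Qed.

End DriftLeft.

Section DriftImproves.

Variables (R : realType) (n : nat) (X : 'M[R]_n.+1) (t : R).
Hypotheses (X_line : line_strategy X) (t01 : 0 <= t <= 1).
Implicit Types (y z : 'I_n.+1) (k : nat).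

Let Q := mixmx X (drift_left R n) t.
Let X_st := line_strategy_stochastic X_line.
Let Q_st := line_strategy_stochastic (line_strategy_mixmx t01 X_line (drift_left_line R n)).

Lemma reach_drift_step k y :
  (forall z, reach X k z ord0 <= reach Q k z ord0) -> y != ord0 ->
  (1 - t) * reach X k.+1 y ord0 + t * reach Q k (pred_ord y) ord0 <= reach Q k.+1 y ord0.
Proof.
move=> XQ y0; have /andP[t0 t1] := t01.
rewrite (reachS _ Q_st y0) (reachS _ X_st y0) (sum_mixmx _ _ _ _ xpredT) sum_drift_left.
rewrite lerD2r ler_wpM2l ?subr_ge0 //; apply: ler_sum => z _.
by apply: ler_wpM2l; [case: X_st | apply: XQ].
Qed.

Lemma reach_drift_ge k y : reach X k y ord0 <= reach Q k y ord0.
Proof.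
have /andP[t0 t1] := t01.
elim: k y => [|k IH] y; first by rewrite /reach /hit_le.
have [->|y0] := eqVneq y ord0; first by rewrite !reach_id.
apply: le_trans (reach_drift_step IH y0).
have shift : reach X k.+1 y ord0 <= reach Q k (pred_ord y) ord0.
  apply: le_trans (IH _); apply: reach_shift => //=.
  by move: y0; rewrite -val_eqE /=; lia.
have := ler_wpM2l t0 shift; lra.
Qed.

(* With probability [t ^+ m] the first [m] steps all follow [drift_left]. *)
Lemma reach_drift_chain k m (y y' : 'I_n.+1) : y = (y' + m)%N :> nat ->
  t ^+ m * reach Q k y' ord0 + (1 - t ^+ m) * reach X (k + m) y ord0
    <= reach Q (k + m) y ord0.
Proof.
have /andP[t0 t1] := t01.
elim: m y => [|m IH] y yy'.
  have -> : y = y' by apply: val_inj; rewrite /= yy' addn0.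
  by rewrite expr0 subrr mul1r mul0r addr0 addn0.
have y0 : y != ord0 by rewrite -val_eqE /= yy' addnS.
have py : pred_ord y = (y' + m)%N :> nat by rewrite /= yy' addnS.
have shift : reach X (k + m).+1 y ord0 <= reach X (k + m) (pred_ord y) ord0.
  by apply: reach_shift => //=; rewrite yy' addnS.
have step := reach_drift_step (@reach_drift_ge (k + m)) y0.
have s0 : 0 <= t ^+ m by rewrite exprn_ge0.
have s1 : t ^+ m <= 1 by rewrite exprn_ile1.
have ts0 : 0 <= t * (1 - t ^+ m) by rewrite mulr_ge0 // subr_ge0.
have := ler_wpM2l t0 (IH _ py); have := ler_wpM2l ts0 shift.
rewrite addnS exprS; move: step s0 s1.
set s := t ^+ m; set A := reach Q k y' ord0; set C := reach X (k + m).+1 y ord0.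
set B := reach X (k + m) (pred_ord y) ord0; set D := reach Q (k + m) (pred_ord y) ord0.
nra.
Qed.

End DriftImproves.

Lemma min_hit_improvable (R : realType) n (X : 'M[R]_n.+1) tau :
  line_strategy X -> (2 <= n)%N -> (n <= tau)%N ->
  hit_le X tau ord_max ord0 < hit_le X tau ord0 ord_max ->
  exists2 Q : 'M[R]_n.+1, line_strategy Q & min_hit X tau < min_hit Q tau.
Proof.
move=> X_line n_ge2 n_le_tau.
have tau_gt0 : (0 < tau)%N by lia.
have last_first : ord_max != ord0 :> 'I_n.+1 by rewrite -val_eqE /=; lia.
have X_st := line_strategy_stochastic X_line.
set f := hit_le X tau ord0 ord_max; set g := hit_le X tau ord_max ord0 => gf.
have g0 : 0 <= g by apply: hit_le_ge0.
have f1 : f <= 1 by apply: hit_le_le1.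
have tau0 : 0 <= tau%:R :> R by [].
have tau1_gt0 : 0 < tau%:R + 1 :> R by rewrite ltr_wpDl.
(* Small enough that [f - tau * t = g + t] stays above [g]. *)
set t := (f - g) / (tau%:R + 1).
have t_def : t * (tau%:R + 1) = f - g by rewrite divfK // gt_eqF.
have t_gt0 : 0 < t by rewrite divr_gt0 // subr_gt0.
have t01 : 0 <= t <= 1 by rewrite ltW //=; nra.
pose Q := mixmx X (drift_left R n) t.
have Q_line : line_strategy Q by apply: line_strategy_mixmx => //; apply: drift_left_line.
exists Q => //.
have f_lower : f - tau%:R * t <= hit_le Q tau ord0 ord_max.
  have := avoid_mixmx tau ord0 ord_max t01 X_st (line_strategy_stochastic (drift_left_line R n)).
  by rewrite /f /hit_le; lra.
have g_lower : t ^+ n + (1 - t ^+ n) * g <= hit_le Q tau ord_max ord0.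
  have := reach_drift_chain X_line t01 (tau - n) (y := ord_max) (y' := ord0) erefl.
  by rewrite subnK // reach_id mulr1 -!hit_le_reach.
have tn_gt0 : 0 < t ^+ n by rewrite exprn_gt0.
rewrite (min_hit_ends X_line n_ge2 tau_gt0) (min_hit_ends Q_line n_ge2 tau_gt0).
rewrite (min_idPr (ltW gf)) lt_min; apply/andP; split; nra.
Qed.

Theorem lemma6 (R : realType) (n : nat) (hn : (3 <= n)%N) (tau : nat)
    (htau1 : (n.-1 <= tau)%N) (htau2 : (tau <= 2 * n - 3)%N)
    (Pstar : 'M[R]_n) (hopt : optimal_line tau Pstar)
    (first last : 'I_n) (hfirst : val first = 0%N) (hlast : val last = n.-1) :
  hit_le Pstar tau first last = hit_le Pstar tau last first.
Proof.
move: first last hfirst hlast; case: n hn htau1 htau2 Pstar hopt => [//|n].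
rewrite ltnS /= => n_ge2 n_le_tau _ P [P_line P_opt] first last first0 last_n.
have -> : first = ord0 by apply: val_inj.
have -> : last = ord_max by apply: val_inj.
have tau_gt0 : (0 < tau)%N by lia.
case: (ltgtP (hit_le P tau ord0 ord_max) (hit_le P tau ord_max ord0)) => // [fg|gf].
- have [Q Q_line] : exists2 Q : 'M[R]_n.+1,
      line_strategy Q & min_hit (revmx P) tau < min_hit Q tau.
    apply: min_hit_improvable (revmx_line_strategy P_line) n_ge2 n_le_tau _.
    by rewrite !hit_le_revmx rev_ord0 rev_ord_max.
  by rewrite min_hit_revmx // ltNge P_opt.
- have [Q Q_line] := min_hit_improvable P_line n_ge2 n_le_tau gf.
  by rewrite ltNge P_opt.
Qed.
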